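(* Let $\Omega$ be a Polish space and $\mathcal{P}$ a weakly relatively compact set of Borel probability measures on $\Omega$. There is a countable subset $\mathcal{Q}=\{P_n,\ n\in\mathbb{N}\}$ of $\mathcal{P}$ such that for every $p\in[1,\infty)$ and every $X\in L^1(c_{p,\mathcal{P}})$, $$c_{p,\mathcal{P}}(X)=\sup_{n\in\mathbb{N}}\big(E_{P_n}(|X|^p)\big)^{1/p}.$$ Moreover the capacities $c_{p,\mathcal{P}}$ and $c_{p,\mathcal{Q}}$ (defined on $\mathcal{C}_b(\Omega)$ and extended to all real functions) are equal, and $L^1(c_{p,\mathcal{P}})=L^1(c_{p,\mathcal{Q}})$.
   Context: For a set $\mathcal{R}$ of Borel probability measures and $1\le p<\infty$, $c_{p,\mathcal{R}}(f)=\sup_{P\in\mathcal{R}}E_P(|f|^p)^{1/p}$ for $f\in\mathcal{C}_b(\Omega)$ (a capacity when $\mathcal{R}$ is weakly relatively compact: a monotone seminorm with $\inf_n c(f_n)=0$ for $f_n$ decreasing to $0$). It is extended to all real functions by $c(f)=\sup\{c(\varphi):\varphi\in\mathcal{C}_b(\Omega),0\le\varphi\le f\}$ for $f\ge0$ lower semicontinuous and $c(g)=\inf\{c(f):f\text{ l.s.c.},f\ge|g|\}$ in general. $L^1(c)$ denotes the Banach space obtained as the quotient by $c$-null elements of the closure of $\mathcal{C}_b(\Omega)$ for $c$ in $\{g: c(g)<\infty\}$. Weak topology: the coarsest making $\mu\mapsto\int f\,d\mu$ continuous for every $f\in\mathcal{C}_b(\Omega)$. *)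

From HB Require Import structures.
From mathcomp Require Import all_boot all_order all_algebra.
From mathcomp Require Import all_classical all_reals all_analysis.
Set Implicit Arguments. Unset Strict Implicit. Unset Printing Implicit Defensive.
Import Order.TTheory GRing.Theory Num.Theory.
Import numFieldNormedType.Exports.
Local Open Scope classical_set_scope.
Local Open Scope ring_scope.

(** Polish space: (the topology of) a complete, separable metric space;
    a metric is a Hausdorff pseudometric. *)
Definition separable_space (T : topologicalType) : Prop :=
  exists D : set T, countable D /\ closure D = [set: T].

Definition polish (R : realType) (T : completePseudoMetricType R) : Prop :=
  hausdorff_space T /\ separable_space T.

Section Capacities.
Context {R : realType} {T : completePseudoMetricType R}.

Definition borel := g_sigma_algebraType (@open T).

Definition probM := probability borel R.
HB.instance Definition _ := gen_eqMixin probM.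
HB.instance Definition _ := gen_choiceMixin probM.

Definition isCb (phi : T -> R) : Prop :=
  continuous phi /\ exists M : R, forall x, `|phi x| <= M.

Definition Cb := {f : T -> R | isCb f}.

Definition integrals (P : probM) : {ptws Cb -> R} :=
  fun f => Rintegral (P : measure borel R) setT (sval f).

Definition weakProb := initial_topology integrals.

Definition weakly_relatively_compact (A : set probM) : Prop :=
  compact (closure (A : set weakProb)).

Local Open Scope ereal_scope.

Definition expect (P : probM) (h : T -> R) : \bar R :=
  \int[(P : measure borel R)]_x (h x)%:E.

Definition capCb (p : R) (Rs : set probM) (phi : T -> R) : \bar R :=
  ereal_sup [set poweR (expect P (fun x => powR `|phi x| p)) p^-1 | P in Rs].


(** extension to nonnegative lower semicontinuous functions *)
Definition capLsc (p : R) (Rs : set probM) (f : T -> R) : \bar R :=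
  ereal_sup [set capCb p Rs phi |
              phi in [set phi | isCb phi /\ forall x, (0 <= phi x <= f x)%R]].

Definition cap (p : R) (Rs : set probM) (g : T -> R) : \bar R :=
  ereal_inf [set capLsc p Rs f |
              f in [set f : T -> R | lower_semicontinuous (fun x => (f x)%:E)
                                     /\ forall x, (`|g x| <= f x)%R]].

(** membership in the closure of C_b (for c) inside {g | c(g) < oo};
    L^1(c) is the quotient of this set by the c-null functions *)
Definition inL1 (p : R) (Rs : set probM) (g : T -> R) : Prop :=
  cap p Rs g < +oo /\
  forall e : R, (0 < e)%R ->
    exists phi : T -> R, isCb phi /\ cap p Rs (fun x => g x - phi x)%R < e%:E.

End Capacities.

From HB Require Import structures.
From mathcomp Require Import all_boot all_order all_algebra.
From mathcomp Require Import all_classical all_reals all_analysis.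
From mathcomp Require Import measurable_realfun lra ring.
Import Order.TTheory GRing.Theory Num.Theory.
Import numFieldNormedType.Exports.
Local Open Scope classical_set_scope.
Local Open Scope ring_scope.
Set Implicit Arguments. Unset Strict Implicit.

(* A nonnegative lower semicontinuous function on a separable metric space is
   the increasing limit of finite maxima of hat functions drawn from a fixed
   countable family (rational heights and slopes, centres in a countable dense
   set).  By monotone convergence, E_P(f) is therefore the supremum of E_P over
   countably many bounded continuous functions, and picking, for each such
   function and each rational threshold, one P in Ps exceeding the threshold
   (when one exists) gives a countable Qs with the same suprema
   sup_P E_P(f).  This settles the capacities on C_b, hence their l.s.c. and
   general extensions; for X in L^1(c) one approximates X by a continuous phi
   up to an l.s.c. majorant h of |X - phi| of small capacity. *)

Section RealFacts.
Context {R : realType}.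

Lemma rat_between_ereal (t : R) (E : \bar R) : (t%:E < E)%E ->
  exists q : rat, t < ratr q /\ ((ratr q)%:E < E)%E.
Proof.
case: E => [y| |] // ty.
- have [q] := rat_in_itvoo ty; rewrite in_itv /= => /andP[tq qy].
  by exists q; rewrite lte_fin.
- have [q] : exists q, ratr q \in `]t, t + 1[ by apply: rat_in_itvoo; rewrite ltrDl.
  rewrite in_itv /= => /andP[tq _]; exists q; split=> //; exact: ltry.
Qed.

Lemma powR_invrK (a r : R) : 0 <= a -> r != 0 -> powR (powR a r^-1) r = a.
Proof. by move=> a0 r0; rewrite -powRrM mulVf // powRr1. Qed.

Lemma continuous_powR (p a : R) : 0 < a -> {for a, continuous (fun b : R => powR b p)}.
Proof.
move=> a0; have : derivable (fun b : R => powR b p) a 1.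
  by apply: derivable_powR; rewrite in_itv /= andbT.
by move/derivable1_diffP/differentiable_continuous.
Qed.

Lemma cvg_powR_le (u : nat -> R) (l p : R) : (forall N, 0 <= u N <= l) ->
  u @ \oo --> l -> (fun N => powR (u N) p) @ \oo --> powR l p.
Proof.
move=> u0l ul; have [l0|l0] := eqVneq l 0.
  have u0 N : u N = 0 by apply/eqP; rewrite eq_le andbC; have := u0l N; rewrite l0.
  by rewrite l0; under eq_fun do rewrite u0; exact: cvg_cst.
have lpos : 0 < l by rewrite lt_def l0 /=; case/andP: (u0l 0%N); exact: le_trans.
exact: (cvg_comp _ _ ul (continuous_powR (p := p) lpos)).
Qed.

Local Open Scope ereal_scope.

Lemma lee_lt_fin (x y : \bar R) : (forall a : R, a%:E < x -> a%:E <= y) -> x <= y.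
Proof.
move=> xy; rewrite leNgt; apply/negP => yx.
case: y yx xy => [y| |] yx xy.
- case: x yx xy => [x| |] // yx xy.
    rewrite lte_fin in yx.
    have : ((y + x) / 2)%:E < x%:E by rewrite lte_fin; lra.
    by move/xy; rewrite lee_fin; lra.
  by have := xy (y + 1)%R (ltry _); rewrite lee_fin; lra.
- by move: yx; rewrite ltNge leey.
- case: x yx xy => [x| |] // _ xy.
    have : (x - 1)%:E < x%:E by rewrite lte_fin; lra.
    by move/xy; rewrite leeNy_eq.
  by have := xy 0%R (ltry _); rewrite leeNy_eq.
Qed.

Lemma poweR_gt_fin (y : \bar R) (r a : R) : (0 < r)%R -> (0 <= a)%R -> 0 <= y ->
  a%:E < poweR y r -> exists2 b : R, (0 <= b)%R /\ b%:E < y & (a < powR b r)%R.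
Proof.
case: y => [y| |] // r0 a0 y0 ay.
- rewrite poweR_EFin lte_fin in ay; rewrite lee_fin in y0.
  pose c := powR a r^-1.
  have cy : (c < y)%R.
    rewrite ltNge; apply/negP => yc; move: ay; rewrite ltNge => /negP; apply.
    rewrite -(powR_invrK a0 (lt0r_neq0 r0)).
    by apply: (ge0_ler_powR (ltW r0)); rewrite ?nnegrE ?powR_ge0.
  have c0 : (0 <= c)%R by exact: powR_ge0.
  exists ((c + y) / 2)%R; first by split; rewrite ?lte_fin; lra.
  rewrite -[a in (a < _)%R](powR_invrK a0 (lt0r_neq0 r0)) -/c.
  by apply: gt0_ltr_powR; rewrite ?nnegrE //; lra.
- exists (powR (a + 1) r^-1); first by split; [exact: powR_ge0|exact: ltry].
  by rewrite -powRrM mulVf ?lt0r_neq0 // powRr1 ?ltrDl //; lra.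
Qed.

End RealFacts.

Section Capacities.
Context {R : realType} {T : completePseudoMetricType R}.

(** * Hat functions *)

Definition tdist (c x : T) : R := fine (mine (@edist R T (c, x)) 1%E).

Let tdist_fin c x : mine (@edist R T (c, x)) 1%E \is a fin_num.
Proof.
rewrite ge0_fin_numE; last by rewrite le_min edist_ge0 lee01.
by rewrite (@le_lt_trans _ _ 1%E) // ?ge_min ?lexx ?orbT ?ltry.
Qed.

Lemma tdist_ge0 c x : 0 <= tdist c x.
Proof. by rewrite /tdist fine_ge0 // le_min edist_ge0 lee01. Qed.

Lemma tdist_lt_ball c x e : e <= 1 -> tdist c x < e -> ball c e x.
Proof.
move=> e1 cxe; apply: (@edist_lt_ball _ _ e (c, x)).
move: cxe; rewrite /tdist -lte_fin fineK ?tdist_fin // gt_min => /orP[//|].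
by rewrite lte_fin => /lt_le_trans/(_ e1); rewrite ltxx.
Qed.

Lemma ball_tdist_le c x e : 0 < e -> ball c e x -> tdist c x <= e.
Proof.
move=> e0 cxe; rewrite /tdist -lee_fin fineK ?tdist_fin //.
by rewrite ge_min (@edist_fin _ _ e (c, x)).
Qed.

Lemma tdist_ball_le c x y e : 0 < e -> ball y e x -> tdist c x <= tdist c y + e.
Proof.
move=> e0 yxe; rewrite /tdist -lee_fin EFinD !fineK ?tdist_fin //.
rewrite ge_min; have [cy1|cy1] := leP (@edist R T (c, y)) 1%E.
- apply/orP; left; apply: le_trans (edist_triangle c y x) _.
  exact/leeD2l/(@edist_fin _ _ e (y, x)).
- by apply/orP; right; rewrite leeDl // lee_fin ltW.
Qed.

Lemma continuous_tdist c : continuous (tdist c).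
Proof.
move=> x; apply/cvgrPdist_le => e e0; near=> y.
have xye : ball x e y by near: y; apply: nbhsx_ballx.
rewrite ler_norml; apply/andP; split.
- have := tdist_ball_le c e0 xye; lra.
- have := tdist_ball_le c e0 (ball_sym xye); lra.
Unshelve. all: by end_near.
Qed.

Definition hat (c : T) (h : R) (n : nat) (x : T) : R :=
  h * Num.max 0 (1 - n.+1%:R * tdist c x).

Lemma hat_le_norm c h n x : hat c h n x <= `|h|.
Proof.
have m1 : Num.max 0 (1 - n.+1%:R * tdist c x) <= 1.
  by rewrite ge_max ler01 lerBlDr lerDl mulr_ge0 ?tdist_ge0.
have m0 : 0 <= Num.max 0 (1 - n.+1%:R * tdist c x) by rewrite le_max lexx.
rewrite /hat (le_trans (ler_norm _)) // normrM (ger0_norm m0).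
exact: ler_piMr.
Qed.

Lemma hat_le c h n x : 0 <= h -> hat c h n x <= h.
Proof. by move=> h0; rewrite -[leRHS]ger0_norm ?hat_le_norm. Qed.

Lemma hat_ge c h n x : 0 <= h -> h * (1 - n.+1%:R * tdist c x) <= hat c h n x.
Proof. by move=> h0; rewrite /hat ler_wpM2l // le_max lexx orbT. Qed.

Lemma continuous_hat c h n : continuous (hat c h n).
Proof.
move=> x; apply: cvgM; first exact: cvg_cst.
apply: (continuous_max (f := cst 0) (g := fun y => 1 - n.+1%:R * tdist c y)).
  exact: cvg_cst.
by apply: cvgB; [exact: cvg_cst|apply: cvgM; [exact: cvg_cst|exact: continuous_tdist]].
Qed.

Lemma hat_le_on_ball c h n (g : T -> R) : (forall y, 0 <= g y) ->
  (forall y, ball c n.+1%:R^-1 y -> h <= g y) -> forall y, hat c h n y <= g y.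
Proof.
move=> g0 hg y; have [hy0|hy0] := leP (hat c h n y) 0; first exact: le_trans (g0 y).
have h0 : 0 < h.
  rewrite ltNge; apply: contraTN hy0 => h0.
  by rewrite -leNgt mulr_le0_ge0 // le_max lexx.
apply: le_trans (hat_le _ _ _ (ltW h0)) (hg y _).
apply: tdist_lt_ball; first by rewrite invf_le1 // ler1n.
have n0 : (0 < n.+1%:R :> R) by [].
rewrite -(ltr_pM2l n0) mulfV ?gt_eqF //.
suff : 0 < 1 - n.+1%:R * tdist c y by lra.
rewrite ltNge; apply/negP => le0.
by move: hy0; rewrite /hat max_l // mulr0 ltxx.
Qed.

(* The hat [(j, q, n)] has height [q] and slope [n.+1] and is centred at [ds j]. *)
Definition hat_index := (nat * rat * nat)%type.

Definition rhat (ds : nat -> T) (i : hat_index) : T -> R :=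
  let: (j, q, n) := i in hat (ds j) (ratr q) n.

Definition maxhat (ds : nat -> T) (s : seq hat_index) (x : T) : R :=
  \big[Num.max/0]_(i <- s) rhat ds i x.

Lemma continuous_rhat ds i : continuous (rhat ds i).
Proof. by case: i => [[j q] n]; exact: continuous_hat. Qed.

Lemma maxhat_ge0 ds s x : 0 <= maxhat ds s x.
Proof. exact: bigmax_ge_id. Qed.

Lemma rhat_le_maxhat ds s i x : i \in s -> rhat ds i x <= maxhat ds s x.
Proof. by move=> si; exact: (le_bigmax_seq _ _ _ _ si). Qed.

Lemma maxhat_le ds s (g : T -> R) x : 0 <= g x ->
  (forall i, i \in s -> rhat ds i x <= g x) -> maxhat ds s x <= g x.
Proof. by move=> g0 sg; rewrite /maxhat big_seq; apply: bigmax_le. Qed.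

Lemma maxhat_subset ds s t x : {subset s <= t} -> maxhat ds s x <= maxhat ds t x.
Proof.
by move=> st; apply: maxhat_le (maxhat_ge0 _ _ _) _ => i /st; apply: rhat_le_maxhat.
Qed.

Lemma continuous_maxhat ds s : continuous (maxhat ds s).
Proof.
elim: s => [|i s IH].
  by rewrite /maxhat; under eq_fun do rewrite big_nil; exact: cst_continuous.
have -> : maxhat ds (i :: s) = rhat ds i \max maxhat ds s.
  by apply/funext => x; rewrite /maxhat big_cons.
by move=> x; apply: continuous_max; [exact: continuous_rhat|exact: IH].
Qed.

Lemma isCb_maxhat ds s : isCb (maxhat ds s).
Proof.
split; first exact: continuous_maxhat.
exists (\sum_(i <- s) `|ratr i.1.2 : R|) => x.
rewrite ger0_norm ?maxhat_ge0 // /maxhat.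
elim: s => [|[[j q] n] s IH]; first by rewrite !big_nil.
rewrite !big_cons ge_max; apply/andP; split.
- by rewrite (le_trans (hat_le_norm _ _ _ _)) // lerDl sumr_ge0.
- by rewrite (le_trans IH) // lerDr.
Qed.

(** * Approximation of lower semicontinuous functions *)

Section LowerSemicontinuousApproximation.
Variables (ds : nat -> T) (g : T -> R).
Hypothesis ds_dense : forall x e, 0 < e -> exists j, ball x e (ds j).
Hypothesis g_lsc : lower_semicontinuous (fun x => (g x)%:E).
Hypothesis g_ge0 : forall x, 0 <= g x.

Definition admissible (i : hat_index) := forall y, rhat ds i y <= g y.

Lemma admissible_hat_above x t : t < g x ->
  exists i, admissible i /\ t < rhat ds i x.
Proof.
move=> tgx; have [t0|t0] := ltP t 0.
  exists (0%N, 0%Q, 0%N); rewrite /admissible /= rmorph0 /hat mul0r.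
  by split => // y; rewrite mul0r.
have [q] := rat_in_itvoo tgx; rewrite in_itv /= => /andP[tq qgx].
have q0 : 0 < ratr q :> R by apply: le_lt_trans tq.
have [V Vx Vg] := g_lsc qgx.
have [eps eps0 xV] := (nbhs_ballP _ _).1 Vx.
have [n n_eps] := ltr_add_invr (divr_gt0 eps0 (ltr0Sn R 1)); rewrite add0r in n_eps.
have k0 : 0 < ratr q * n.+1%:R :> R by rewrite mulr_gt0.
pose del := Num.min (eps / 2) ((ratr q - t) / 2 / (ratr q * n.+1%:R)).
have del0 : 0 < del by rewrite lt_min !divr_gt0 // subr_gt0.
have [j xcj] := ds_dense x del0.
exists (j, q, n); split.
  apply: hat_le_on_ball => // y /(ball_triangle xcj) xy.
  have /Vg : V y.
    apply/xV/(le_ball _ xy); rewrite [leRHS]splitr.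
    by apply: lerD (ltW n_eps); rewrite ge_min lexx.
  by rewrite lte_fin => /ltW.
have d_del : tdist (ds j) x <= del by apply: ball_tdist_le => //; exact: ball_sym.
have : del <= (ratr q - t) / 2 / (ratr q * n.+1%:R) by rewrite ge_min lexx orbT.
rewrite ler_pdivlMr // => /(le_trans (ler_wpM2r (ltW k0) d_del)) kd.
apply: lt_le_trans (hat_ge _ _ _ (ltW q0)); move: kd tq.
have -> : ratr q * (1 - n.+1%:R * tdist (ds j) x) =
          ratr q - tdist (ds j) x * (ratr q * n.+1%:R) by ring.
move: (tdist _ _ * _) => z; lra.
Qed.

Definition hats_below (N : nat) : seq hat_index :=
  [seq i <- pmap pickle_inv (iota 0 N) | `[< admissible i >]].

Lemma hats_belowP N i : i \in hats_below N = `[< admissible i >] && (pickle i < N)%N.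
Proof.
rewrite mem_filter mem_pmap; congr (_ && _); apply/mapP/idP => [[k]|iN].
  rewrite mem_iota add0n => kN /esym ik.
  by move: (@pickle_invK hat_index k); rewrite ik /= => ->.
by exists (pickle i); rewrite ?pickleK_inv // mem_iota add0n.
Qed.

Definition lsc_approx (N : nat) : T -> R := maxhat ds (hats_below N).

Lemma lsc_approx_le N x : lsc_approx N x <= g x.
Proof.
by apply: maxhat_le => // i; rewrite hats_belowP => /andP[/asboolP].
Qed.

Lemma nondecreasing_lsc_approx x : nondecreasing_seq (lsc_approx ^~ x).
Proof.
move=> N M NM; apply: maxhat_subset => i; rewrite !hats_belowP => /andP[-> iN].
exact: leq_trans NM.
Qed.

Lemma lsc_approx_cvg x : lsc_approx ^~ x @ \oo --> g x.
Proof.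
apply/cvgrPdist_le => e e0.
have [i [ai gi]] : exists i, admissible i /\ g x - e < rhat ds i x.
  by apply: admissible_hat_above; rewrite ltrBlDr ltrDl.
near=> N.
have iN : i \in hats_below N.
  by rewrite hats_belowP asboolT //=; near: N; exists (pickle i).+1.
have : rhat ds i x <= lsc_approx N x by exact: rhat_le_maxhat.
rewrite ger0_norm ?subr_ge0 ?lsc_approx_le //; lra.
Unshelve. all: by end_near.
Qed.

End LowerSemicontinuousApproximation.

Lemma continuous_lsc (f : T -> R) : continuous f ->
  lower_semicontinuous (fun x => (f x)%:E).
Proof.
move=> cf x a; rewrite lte_fin => ax.
exists [set y | a < f y]; last by move=> y /=; rewrite lte_fin.
have fxa : 0 < f x - a by rewrite subr_gt0.
near=> y.
have : `|f x - f y| < f x - a by near: y; exact: (cvgrPdist_lt _ _).1 (cf x) _ fxa.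
by rewrite ltr_norml => /andP[_]; rewrite /=; lra.
Unshelve. all: by end_near.
Qed.

Lemma lsc_continuousD (u h : T -> R) : continuous u ->
  lower_semicontinuous (fun x => (h x)%:E) ->
  lower_semicontinuous (fun x => (u x + h x)%:E).
Proof.
move=> cu lh x a; rewrite lte_fin => ha.
pose del := (u x + h x - a) / 2.
have hl : ((h x - del)%:E < (h x)%:E)%E by rewrite lte_fin /del; lra.
have ul : ((u x - del)%:E < (u x)%:E)%E by rewrite lte_fin /del; lra.
have [V1 V1x V1h] := lh x _ hl.
have [V2 V2x V2u] := continuous_lsc cu ul.
exists (V1 `&` V2); first exact: filterI.
by move=> y [/V1h + /V2u]; rewrite !lte_fin /del; lra.
Qed.

Lemma lsc_powR_norm (f : T -> R) (p : R) : 0 < p -> continuous f ->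
  lower_semicontinuous (fun x => (powR `|f x| p)%:E).
Proof.
move=> p0 cf x a; rewrite lte_fin => ha.
have [a0|a0] := ltP a 0.
  exists setT => [|y _]; first exact: filterT.
  by rewrite lte_fin (lt_le_trans a0) // powR_ge0.
pose c := powR a p^-1.
have c_fx : c < `|f x|.
  rewrite ltNge; apply/negP => fxc.
  have := ge0_ler_powR (ltW p0) (normr_ge0 (f x)) (powR_ge0 a _) fxc.
  by rewrite powR_invrK ?gt_eqF //; lra.
have cn : continuous (fun y => `|f y|) by move=> y; apply: cvg_norm; exact: cf.
have [V Vx HV] := continuous_lsc cn (c_fx : (c%:E < `|f x|%:E)%E).
exists V => // y /HV; rewrite !lte_fin => cy.
rewrite -(powR_invrK a0 (lt0r_neq0 p0)).
by apply: gt0_ltr_powR; rewrite ?nnegrE ?powR_ge0.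
Qed.

Lemma lsc_measurable (f : T -> R) : lower_semicontinuous (fun x => (f x)%:E) ->
  measurable_fun [set: borel] f.
Proof.
move=> lf _; apply: (measurability _ (RGenOInfty.measurableE R)) => //.
move=> _ [_ [a ->] <-]; rewrite setTI; apply: sub_sigma_algebra.
have := (lower_semicontinuousP _).1 lf a.
by congr open; apply/seteqP; split => x /=; rewrite in_itv /= andbT lte_fin.
Qed.

Local Open Scope ereal_scope.

Lemma expect_ge0 (P : probM) (u : T -> R) : (forall x, 0 <= u x)%R ->
  0 <= expect P u.
Proof. by move=> u0; apply: integral_ge0 => x _; rewrite lee_fin. Qed.

Lemma le_expect (P : probM) (u v : T -> R) : (forall x, 0 <= u x)%R ->
  (forall x, u x <= v x)%R -> expect P u <= expect P v.
Proof.
move=> u0 uv; rewrite /expect !ge0_integralTE => [|x|x]; last 2 first.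
- by rewrite lee_fin (le_trans (u0 x)).
- by rewrite lee_fin.
apply: ereal_sup_le => _ [k ku <-]; exists k => // x.
by apply: le_trans (ku x) _; rewrite lee_fin.
Qed.

Lemma expect_nondecreasing_sup (P : probM) (u : nat -> T -> R) (f : T -> R) :
  (forall N, measurable_fun [set: borel] (u N)) -> (forall N x, 0 <= u N x)%R ->
  (forall x, nondecreasing_seq (u ^~ x)) -> (forall x, u ^~ x @ \oo --> f x) ->
  expect P f = ereal_sup (range (fun N => expect P (u N))).
Proof.
move=> mu u0 ndu uf.
pose U N x := (u N x)%:E.
have mU N : measurable_fun [set: borel] (U N) by exact/measurable_EFinP.
have U0 N x : [set: borel] x -> 0 <= U N x by rewrite lee_fin.
have ndU x : [set: borel] x -> nondecreasing_seq (U ^~ x).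
  by move=> _ n m nm; rewrite lee_fin ndu.
have -> : expect P f = \int[P]_(x in [set: borel]) limn (U ^~ x).
  apply: eq_integral => x _; rewrite /U -(cvg_lim _ (uf x)) //.
  by rewrite -EFin_lim //; apply/cvg_ex; exists (f x).
rewrite (monotone_convergence P measurableT mU U0 ndU).
apply/cvg_lim => //; apply: ereal_nondecreasing_cvgn => n m nm.
by apply: ge0_le_integral => // x _; [exact: U0|exact: ndU].
Qed.

Definition normp (p : R) (P : probM) (h : T -> R) : \bar R :=
  poweR (expect P (fun x => powR `|h x| p)) p^-1.

Lemma normp_ge0 p P h : 0 <= normp p P h.
Proof. exact: poweR_ge0. Qed.

Lemma le_normp p P (u v : T -> R) : (0 < p)%R -> (forall x, `|u x| <= `|v x|)%R ->
  normp p P u <= normp p P v.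
Proof.
move=> p0 uv; apply: gt0_ler_poweR; first by rewrite invr_ge0 ltW.
- by rewrite in_itv /= leey andbT expect_ge0 // => x; exact: powR_ge0.
- by rewrite in_itv /= leey andbT expect_ge0 // => x; exact: powR_ge0.
apply: le_expect => x; first exact: powR_ge0.
by apply: ge0_ler_powR (uv x); rewrite ?nnegrE // ltW.
Qed.

Lemma le_normp_expect p Q h (b : R) : (0 < p)%R -> (0 <= b)%R ->
  b%:E <= expect Q (fun x => powR `|h x| p) -> (powR b p^-1)%:E <= normp p Q h.
Proof.
move=> p0 b0 bE; rewrite -poweR_EFin; apply: gt0_ler_poweR => //.
- by rewrite invr_ge0 ltW.
- by rewrite in_itv /= leey andbT lee_fin.
- by rewrite in_itv /= leey andbT (le_trans _ bE) // lee_fin.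
Qed.

Let normp_Lnorm p (P : probM) (h : T -> R) : normp p P h = Lnorm P p%:E (EFin \o h).
Proof. by rewrite unlock /normp /expect; congr poweR. Qed.

(* [X] need not be measurable: Minkowski is applied to the measurable
   [max (|phi| - h) 0], which lies below [|X|]. *)
Lemma normp_le_normpD p (P : probM) (phi X h : T -> R) : (1 <= p)%R ->
  measurable_fun [set: borel] phi -> measurable_fun [set: borel] h ->
  (forall x, 0 <= h x)%R -> (forall x, `|phi x| <= `|X x| + h x)%R ->
  normp p P phi <= normp p P X + normp p P h.
Proof.
move=> p1 mphi mh h0 phiXh; have p0 : (0 < p)%R by exact: lt_le_trans p1.
pose u x := Num.max (`|phi x| - h x)%R 0%R.
have mu : measurable_fun [set: borel] u.
  apply: measurable_maxr => //; apply: measurable_funB => //.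
  by apply: measurableT_comp => //; exact: normr_measurable.
have u0 x : (0 <= u x)%R by rewrite /u le_max lexx orbT.
apply: (@le_trans _ _ (normp p P (fun x => u x + h x)%R)).
  apply: le_normp => // x; rewrite (ger0_norm (addr_ge0 (u0 x) (h0 x))).
  by rewrite -lerBlDr le_max lexx.
rewrite !normp_Lnorm; apply: le_trans (minkowski_EFin P mu mh p1) _.
rewrite -!normp_Lnorm leeD2r //; apply: le_normp => // x.
by rewrite ger0_norm // ge_max normr_ge0 andbT; have := phiXh x; lra.
Qed.

(** * A countable norming family *)

Section DenseSequence.
Variable ds : nat -> T.
Hypothesis ds_dense : forall x e, (0 < e)%R -> exists j, ball x e (ds j).

Section LscFunction.
Variable g : T -> R.
Hypothesis g_lsc : lower_semicontinuous (fun x => (g x)%:E).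
Hypothesis g_ge0 : forall x, (0 <= g x)%R.

Let measurable_lsc_approx N : measurable_fun [set: borel] (lsc_approx ds g N).
Proof. by apply: lsc_measurable; apply: continuous_lsc; exact: continuous_maxhat. Qed.

Lemma expect_lsc_approx P :
  expect P g = ereal_sup (range (fun N => expect P (lsc_approx ds g N))).
Proof.
apply: expect_nondecreasing_sup => [N|N x|x|x].
- exact: measurable_lsc_approx.
- exact: maxhat_ge0.
- exact: nondecreasing_lsc_approx.
- exact: lsc_approx_cvg ds_dense g_lsc g_ge0 x.
Qed.

Lemma expect_powR_lsc_approx P p : (0 < p)%R ->
  expect P (fun x => powR `|g x| p) =
  ereal_sup (range (fun N => expect P (fun x => powR `|lsc_approx ds g N x| p))).
Proof.
move=> p0; apply: expect_nondecreasing_sup => [N|N x|x|x].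
- by apply: lsc_measurable; apply: lsc_powR_norm => //; exact: continuous_maxhat.
- exact: powR_ge0.
- move=> N M NM; apply: (ge0_ler_powR (ltW p0)); rewrite ?nnegrE //.
  by rewrite !ger0_norm ?maxhat_ge0 //; exact: (nondecreasing_lsc_approx ds g x NM).
- apply: cvg_powR_le; last by apply: cvg_norm; exact: lsc_approx_cvg.
  by move=> N; rewrite normr_ge0 !ger0_norm ?maxhat_ge0 ?(lsc_approx_le ds g_ge0).
Qed.

Lemma normp_le_capLsc p Rs P : (0 < p)%R -> Rs P ->
  normp p P g <= capLsc p Rs g.
Proof.
move=> p0 RsP.
have approx_le N : normp p P (lsc_approx ds g N) <= capLsc p Rs g.
  apply: (@le_trans _ _ (capCb p Rs (lsc_approx ds g N))).
    by apply: ereal_sup_ubound; exists P.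
  apply: ereal_sup_ubound; exists (lsc_approx ds g N) => //; split.
    exact: isCb_maxhat.
  by move=> x; rewrite maxhat_ge0 (lsc_approx_le ds g_ge0).
apply: lee_lt_fin => a ga; have [a0|a0] := ltP a 0%R.
  by apply: le_trans (approx_le 0%N); rewrite (le_trans _ (normp_ge0 _ _ _)) // lee_fin ltW.
have ip0 : (0 < p^-1)%R by rewrite invr_gt0.
have [b [b0 bE] ab] := poweR_gt_fin ip0 a0
  (expect_ge0 _ (fun x => powR_ge0 _ _)) ga.
move: bE; rewrite (expect_powR_lsc_approx P p0) => /ereal_sup_gt[_ [N _ <-] bN].
apply: le_trans (approx_le N); apply: le_trans (le_normp_expect p0 b0 (ltW bN)).
by rewrite lee_fin ltW.
Qed.

End LscFunction.

Section NormingFamily.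
Variables (Ps : set (@probM R T)) (P0 : @probM R T).
Hypothesis P0Ps : Ps P0.

Definition prob_above (s : seq hat_index) (q : rat) : @probM R T :=
  if pselect (exists Q, Ps Q /\ (ratr q)%:E < expect Q (maxhat ds s)) is left H
  then proj1_sig (cid H) else P0.

Lemma prob_above_in s q : Ps (prob_above s q).
Proof. by rewrite /prob_above; case: pselect => // H; case: (cid H) => Q []. Qed.

Lemma prob_above_gt s q Q : Ps Q -> (ratr q)%:E < expect Q (maxhat ds s) ->
  (ratr q)%:E < expect (prob_above s q) (maxhat ds s).
Proof.
move=> PsQ qQ; rewrite /prob_above; case: pselect => [H|[]]; last by exists Q.
by case: (cid H) => Q' [].
Qed.

Definition norming_family : set (@probM R T) :=
  range (fun sq : seq hat_index * rat => prob_above sq.1 sq.2).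

Lemma norming_family_sub : norming_family `<=` Ps.
Proof. by move=> _ [sq _ <-]; exact: prob_above_in. Qed.

Lemma countable_norming_family : countable norming_family.
Proof. exact: (sub_countable (card_image_le _ _) (countableP _)). Qed.

Lemma norming_family_expect g P (b : R) : lower_semicontinuous (fun x => (g x)%:E) ->
  (forall x, 0 <= g x)%R -> Ps P -> b%:E < expect P g ->
  exists2 Q, norming_family Q & b%:E < expect Q g.
Proof.
move=> g_lsc g0 PsP; rewrite (expect_lsc_approx g_lsc g0) => /ereal_sup_gt[_ [N _ <-] bN].
have [q [bq qN]] := rat_between_ereal bN.
exists (prob_above (hats_below ds g N) q); first by exists (hats_below ds g N, q).
apply: lt_trans (_ : (ratr q)%:E < _); first by rewrite lte_fin.
apply: lt_le_trans (prob_above_gt PsP qN) _.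
apply: le_expect => x; [exact: maxhat_ge0|exact: (lsc_approx_le ds g0)].
Qed.

Lemma norming_family_normp p (phi : T -> R) P (a : R) : (0 < p)%R -> continuous phi ->
  Ps P -> a%:E < normp p P phi -> exists2 Q, norming_family Q & a%:E < normp p Q phi.
Proof.
move=> p0 cphi PsP aP; have [a0|a0] := ltP a 0%R.
  exists (prob_above [::] 0); first by exists ([::], 0%Q).
  by apply: lt_le_trans (normp_ge0 _ _ _); rewrite lte_fin.
have ip0 : (0 < p^-1)%R by rewrite invr_gt0.
have [b [b0 bP] ab] := poweR_gt_fin ip0 a0
  (expect_ge0 _ (fun x => powR_ge0 _ _)) aP.
have [Q Qn bQ] := norming_family_expect (lsc_powR_norm p0 cphi)
  (fun x => powR_ge0 _ _) PsP bP.
exists Q => //; apply: lt_le_trans (le_normp_expect p0 b0 (ltW bQ)).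
by rewrite lte_fin.
Qed.

End NormingFamily.
End DenseSequence.

Section NormingSubfamily.
Variables (p : R) (Ps Qs : set (@probM R T)).
Hypothesis p1 : (1 <= p)%R.
Hypothesis QsPs : Qs `<=` Ps.
Hypothesis Qs_norming : forall phi P (a : R), continuous phi -> Ps P ->
  a%:E < normp p P phi -> exists2 Q, Qs Q & a%:E < normp p Q phi.
Hypothesis normp_le_capLsc_Ps : forall P f, Ps P ->
  lower_semicontinuous (fun x => (f x)%:E) -> (forall x, 0 <= f x)%R ->
  normp p P f <= capLsc p Ps f.

Let p0 : (0 < p)%R. Proof. exact: lt_le_trans p1. Qed.

Lemma normp_le_capCb phi P : continuous phi -> Ps P -> normp p P phi <= capCb p Qs phi.
Proof.
move=> cphi PsP; apply: lee_lt_fin => a /(Qs_norming cphi PsP)[Q QsQ aQ].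
by apply/ltW/(lt_le_trans aQ)/ereal_sup_ubound; exists Q.
Qed.

Lemma capCb_norming phi : continuous phi -> capCb p Ps phi = capCb p Qs phi.
Proof.
move=> cphi; apply/eqP; rewrite eq_le; apply/andP; split.
- by apply: ge_ereal_sup => _ [P PsP <-]; exact: normp_le_capCb.
- by apply: ereal_sup_le => _ [Q QsQ <-]; exists Q => //; apply: QsPs.
Qed.

Lemma capLsc_norming : capLsc p Ps = capLsc p Qs.
Proof.
apply/funext => f; congr ereal_sup; apply/seteqP.
by split => _ [phi [[cphi Mphi] phif] <-]; exists phi => //; rewrite capCb_norming.
Qed.

Lemma cap_norming : cap p Ps = cap p Qs.
Proof. by rewrite /cap capLsc_norming. Qed.

Lemma inL1_norming g : inL1 p Ps g <-> inL1 p Qs g.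
Proof. by rewrite /inL1 cap_norming. Qed.

Lemma sup_normp_le_cap X : ereal_sup [set normp p P X | P in Qs] <= cap p Ps X.
Proof.
apply: le_ereal_inf_tmp => _ [f [f_lsc Xf] <-].
have f0 x : (0 <= f x)%R by exact: le_trans (normr_ge0 _) (Xf x).
apply: ge_ereal_sup => _ [Q QsQ <-].
apply: le_trans (normp_le_capLsc_Ps (QsPs QsQ) f_lsc f0).
by apply: le_normp => // x; rewrite (ger0_norm (f0 x)).
Qed.

(* With [phi] continuous and [h] an l.s.c. majorant of [|X - phi|] of capacity
   [< e/2], both [phi] and the l.s.c. majorant [|phi| + h] of [|X|] are
   controlled through [Qs]. *)
Lemma cap_eq_sup X : inL1 p Ps X -> cap p Ps X = ereal_sup [set normp p P X | P in Qs].
Proof.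
move=> [_ XL1]; apply/eqP; rewrite eq_le sup_normp_le_cap andbT.
set S := ereal_sup _; apply/lee_addgt0Pr => e e0.
have [phi [[cphi _] /ereal_inf_lt[_ [h [h_lsc Xh] <-] he]]] := XL1 _ (divr_gt0 e0 (ltr0Sn R 1)).
have h0 x : (0 <= h x)%R by exact: le_trans (normr_ge0 _) (Xh x).
have mh : measurable_fun [set: borel] h by exact: lsc_measurable.
have mphi (f : T -> R) : continuous f -> measurable_fun [set: borel] f.
  by move=> cf; apply: lsc_measurable; exact: continuous_lsc.
have normp_h P : Ps P -> normp p P h <= (e / 2)%:E.
  by move=> PsP; apply: le_trans (normp_le_capLsc_Ps PsP h_lsc h0) (ltW he).
have phiXh x : (`|phi x| <= `|X x| + h x)%R.
  have -> : phi x = (X x - (X x - phi x))%R by ring.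
  by apply: le_trans (ler_normB _ _) _; rewrite lerD2l; exact: Xh.
have normp_phi P : Ps P -> normp p P phi <= S + (e / 2)%:E.
  move=> PsP; apply: le_trans (normp_le_capCb cphi PsP) _.
  apply: ge_ereal_sup => _ [Q QsQ <-].
  apply: le_trans (normp_le_normpD _ p1 (mphi _ cphi) mh h0 phiXh) _.
  apply: leeD; last exact: normp_h (QsPs QsQ).
  by apply: ereal_sup_ubound; exists Q.
pose f x := (`|phi x| + h x)%R.
have Xf x : (`|X x| <= f x)%R.
  have -> : X x = (phi x + (X x - phi x))%R by ring.
  by apply: le_trans (ler_normD _ _) _; rewrite lerD2l; exact: Xh.
have f_lsc : lower_semicontinuous (fun x => (f x)%:E).
  by apply: lsc_continuousD h_lsc => y; apply: cvg_norm; exact: cphi.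
apply: (@le_trans _ _ (capLsc p Ps f)); first by apply: ereal_inf_lbound; exists f.
apply: ge_ereal_sup => _ [psi [[cpsi _] psif] <-].
apply: ge_ereal_sup => _ [P PsP <-].
rewrite [e]splitr EFinD addeA.
apply: le_trans (leeD (normp_phi P PsP) (normp_h P PsP)).
apply: (normp_le_normpD _ p1 (mphi _ cpsi) mh h0) => x.
by have /andP[psi0 psif'] := psif x; rewrite ger0_norm.
Qed.

Lemma norming_subfamily_capacity :
  [/\ forall X, inL1 p Ps X -> cap p Ps X = ereal_sup [set normp p P X | P in Qs],
      forall g, cap p Ps g = cap p Qs g &
      forall g, inL1 p Ps g <-> inL1 p Qs g].
Proof. by split=> [X|g|g]; [exact: cap_eq_sup|rewrite cap_norming|exact: inL1_norming]. Qed.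

End NormingSubfamily.

Lemma separable_dense_seq (x0 : T) : separable_space T ->
  exists ds : nat -> T, forall x e, (0 < e)%R -> exists j, ball x e (ds j).
Proof.
move=> [D [/pfcard_geP[D0|/surjfunPex[ds Dds]] clD]].
  have : closure D x0 by rewrite clD.
  by rewrite D0 closure0.
exists ds => x e e0; have : closure D x by rewrite clD.
by move=> /(_ _ (nbhsx_ballx x e e0)); rewrite Dds => -[_ [[j _ <-] xj]]; exists j.
Qed.

Lemma probM_inhabited (P : @probM R T) : inhabited T.
Proof.
apply: contrapT => noT.
have T0 : [set: borel] = set0 :> set T by apply/seteqP; split => // x; case: noT.
have := probability_setT P; rewrite T0 measure0 => -[] /eqP.
by rewrite eq_sym oner_eq0.
Qed.

End Capacities.

Theorem theorem4p3 (R : realType) (T : completePseudoMetricType R)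
  (polT : polish T) (Ps : set (@probM R T))
  (hPs : weakly_relatively_compact Ps) :
  exists Qs : set (@probM R T),
    [/\ Qs `<=` Ps, countable Qs &
    forall p : R, 1 <= p ->
      [/\ (forall X : T -> R, inL1 p Ps X ->
             cap p Ps X =
             ereal_sup [set poweR (expect P (fun x => powR `|X x| p)) p^-1
                       | P in Qs]),
          (forall g : T -> R, cap p Ps g = cap p Qs g) &
          (forall g : T -> R, inL1 p Ps g <-> inL1 p Qs g)]].
Proof.
have [[P0 P0Ps]|noPs] := pselect (exists P, Ps P); last first.
  exists set0; split; [exact: sub0set|exact: countable0|].
  move=> p p1; apply: norming_subfamily_capacity => // [phi P a _ PsP|P f PsP];
    by case: noPs; exists P.
have [x0] := probM_inhabited P0.
have [ds ds_dense] := separable_dense_seq x0 polT.2.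
exists (norming_family ds Ps P0); split.
- exact: norming_family_sub.
- exact: countable_norming_family.
move=> p p1; have p0 : 0 < p := lt_le_trans ltr01 p1.
apply: norming_subfamily_capacity => //.
- exact: norming_family_sub.
- by move=> phi P a cphi PsP; exact: (norming_family_normp ds_dense P0 p0 cphi PsP).
- by move=> P f PsP f_lsc f0; exact: (normp_le_capLsc ds_dense f_lsc f0 p0 PsP).
Qed.
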